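(* There is exactly one isomorphism class of two-dimensional evolution algebras $A$ over a field $\mathbb{K}$ such that $\dim(A^2)=1$ and $A^3=0$ (namely the algebra $A_6$ with natural basis $\{e_1,e_2\}$, $e_1^2=0$, $e_2^2=e_1$). Its square is $\mathfrak{D}_6$, and this algebra is associative.
   Context: An evolution algebra over $\mathbb{K}$ is a $\mathbb{K}$-algebra with a basis $\{e_i\}$ (natural basis) such that $e_ie_j=0$ for $i\neq j$. $A^2$ is the span of $\{xy:x,y\in A\}$ and $A^3$ the span of $\{xy:x\in A,y\in A^2\}$. For a natural basis $\{e_1,e_2\}$ with $e_1^2=\omega_{11}e_1+\omega_{21}e_2$, $e_2^2=\omega_{12}e_1+\omega_{22}e_2$, its pseudo-square is the subset of $\{L,T,R,D\}$ where $L,T,R,D$ are present iff $\omega_{11},\omega_{12},\omega_{22},\omega_{21}$ respectively are nonzero; the square of $A$ is the set of pseudo-squares of all natural bases; $\mathfrak{D}_6=\{\{D\},\{T\}\}$. *)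

From HB Require Import structures.
From mathcomp Require Import all_boot all_order all_algebra.
Set Implicit Arguments. Unset Strict Implicit. Unset Printing Implicit Defensive.
Import GRing.Theory.
Local Open Scope ring_scope.

Inductive letter := L | T | R | D.

Definition letter_to_ord (x : letter) : 'I_4 :=
  match x with L => inord 0 | T => inord 1 | R => inord 2 | D => inord 3 end.
Definition ord_to_letter (i : 'I_4) : letter :=
  match val i with 0 => L | 1 => T | 2 => R | _ => D end.
Lemma letter_to_ordK : cancel letter_to_ord ord_to_letter.
Proof. by case; rewrite /ord_to_letter /= inordK. Qed.
HB.instance Definition _ := Finite.copy letter (can_type letter_to_ordK).

Section EvolutionAlgebras.
Variable K : fieldType.

(* A two-dimensional K-algebra is modelled on K^2 = 'rV[K]_2, its product being
   determined by the (arbitrary) structure constants c i j = eps_i * eps_j,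
   where eps_0, eps_1 is the standard basis. *)
Definition struct2 := 'I_2 -> 'I_2 -> 'rV[K]_2.

Definition amul (c : struct2) (x y : 'rV[K]_2) : 'rV[K]_2 :=
  \sum_(i < 2) \sum_(j < 2) (x 0 i * y 0 j) *: c i j.

Definition basis_mx (b : 'I_2 -> 'rV[K]_2) : 'M[K]_2 := \matrix_(i < 2, j < 2) b i 0 j.

Definition natural_basis (c : struct2) (b : 'I_2 -> 'rV[K]_2) : Prop :=
  basis_mx b \in unitmx /\ (forall i j, i != j -> amul c (b i) (b j) = 0).

Definition is_evolution (c : struct2) : Prop := exists b, natural_basis c b.

(* Structure matrix w.r.t. basis b: b_j^2 = \sum_i omega i j b_i. *)
Definition omega (c : struct2) (b : 'I_2 -> 'rV[K]_2) (i j : 'I_2) : K :=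
  (amul c (b j) (b j) *m invmx (basis_mx b)) 0 i.

Definition pseudo_square (c : struct2) (b : 'I_2 -> 'rV[K]_2) : {set letter} :=
  [set x | match x with
           | L => omega c b 0 0 != 0
           | T => omega c b 0 1 != 0
           | R => omega c b 1 1 != 0
           | D => omega c b 1 0 != 0
           end].

Definition square (c : struct2) : {set letter} -> Prop :=
  fun S => exists b, natural_basis c b /\ pseudo_square c b = S.

Definition frakD6 : {set letter} -> Prop :=
  fun S => S = [set D] \/ S = [set T].

Definition spanned_by (S : 'rV[K]_2 -> Prop) (V : {vspace 'rV[K]_2}) : Prop :=
  (forall v, S v -> v \in V) /\
  (forall W : {vspace 'rV[K]_2}, (forall v, S v -> v \in W) -> (V <= W)%VS).

Definition is_A2 (c : struct2) (V : {vspace 'rV[K]_2}) : Prop :=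
  spanned_by (fun z => exists x y, z = amul c x y) V.

Definition is_A3 (c : struct2) (W : {vspace 'rV[K]_2}) : Prop :=
  exists V, is_A2 c V /\ spanned_by (fun z => exists x y, y \in V /\ z = amul c x y) W.

Definition assoc_alg (c : struct2) : Prop :=
  forall x y z, amul c (amul c x y) z = amul c x (amul c y z).

Definition alg_iso (c c' : struct2) : Prop :=
  exists M : 'M[K]_2, M \in unitmx /\
    forall x y, amul c x y *m M = amul c' (x *m M) (y *m M).

(* A_6: e_1^2 = 0, e_2^2 = e_1 (e_1, e_2 = standard basis). *)
Definition A6 : struct2 :=
  fun i j => if (i == 1) && (j == 1) then delta_mx 0 0 else 0.

End EvolutionAlgebras.

From mathcomp Require Import all_boot all_order all_algebra.
From mathcomp Require Import perm ring.
Set Implicit Arguments. Unset Strict Implicit. Unset Printing Implicit Defensive.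
Import GRing.Theory.
Local Open Scope ring_scope.

(* In a natural basis (b_0, b_1) the product is x y = x_0 y_0 b_0^2 + x_1 y_1 b_1^2
   in b-coordinates.  Since A^2 <> 0, some b_i^2 =: s is nonzero, say i = 1, and
   A^3 = 0 means that s annihilates A.  Writing s = a b_0 + a' b_1, the product
   b_1 s = a' s forces a' = 0, and then b_0 s = a b_0^2 forces b_0^2 = 0; in the
   basis (s, b_1) the multiplication table is that of A_6.  In A_6 itself the
   two vectors of a natural basis have products whose second coordinates
   multiply to 0, so one of them lies on the line of e_1 = delta_mx 0 0 and
   squares to 0, while the other squares to a nonzero multiple of it: the
   pseudo-square is {T} or {D}. *)

Lemma sum_ord2 (V : nmodType) (F : 'I_2 -> V) : \sum_(i < 2) F i = F 0 + F 1.
Proof.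
rewrite !big_ord_recl big_ord0 addr0.
by congr (F _ + F _); apply: val_inj.
Qed.

Lemma ord2_cases (i : 'I_2) : i = 0 \/ i = 1.
Proof. by case: i => [[|[|m]] Hi]; [left | right | by []]; apply: val_inj. Qed.

Lemma det_mx2 (K : comNzRingType) (A : 'M[K]_2) :
  \det A = A 0 0 * A 1 1 - A 0 1 * A 1 0.
Proof.
rewrite (expand_det_row _ 0) sum_ord2 /cofactor !det_mx11 !mxE /=.
do ![rewrite (_ : lift _ _ = 1 :> 'I_2); last exact: val_inj
    |rewrite (_ : lift _ _ = 0 :> 'I_2); last exact: val_inj].
by rewrite /bump /= expr0 expr1; ring.
Qed.

Section TwoDimensionalAlgebras.
Variable K : fieldType.
Implicit Types (c : struct2 K) (b : 'I_2 -> 'rV[K]_2) (u v x y z : 'rV[K]_2).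

Lemma amulE c x y : amul c x y =
  (x 0 0 * y 0 0) *: c 0 0 + (x 0 0 * y 0 1) *: c 0 1 +
  ((x 0 1 * y 0 0) *: c 1 0 + (x 0 1 * y 0 1) *: c 1 1).
Proof. by rewrite /amul !sum_ord2. Qed.

Lemma amulDl c x x' y : amul c (x + x') y = amul c x y + amul c x' y.
Proof. by apply/rowP => k; rewrite !amulE !mxE; ring. Qed.

Lemma amulZl c a x y : amul c (a *: x) y = a *: amul c x y.
Proof. by apply/rowP => k; rewrite !amulE !mxE; ring. Qed.

Lemma amulDr c x y y' : amul c x (y + y') = amul c x y + amul c x y'.
Proof. by apply/rowP => k; rewrite !amulE !mxE; ring. Qed.

Lemma amulZr c a x y : amul c x (a *: y) = a *: amul c x y.
Proof. by apply/rowP => k; rewrite !amulE !mxE; ring. Qed.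

Lemma mulmx_basis_mx b u : u *m basis_mx b = u 0 0 *: b 0 + u 0 1 *: b 1.
Proof.
rewrite mulmx_sum_row sum_ord2.
by congr (_ *: _ + _ *: _); apply/rowP => j; rewrite !mxE.
Qed.

Lemma amul_mulmx_basis_mx c b u v :
  amul c (u *m basis_mx b) (v *m basis_mx b) =
  \sum_(i < 2) \sum_(j < 2) (u 0 i * v 0 j) *: amul c (b i) (b j).
Proof.
by rewrite !mulmx_basis_mx !amulDl !amulDr !amulZl !amulZr !sum_ord2 !scalerA.
Qed.

Definition coords b x : 'rV[K]_2 := x *m invmx (basis_mx b).

Section Basis.
Variable b : 'I_2 -> 'rV[K]_2.
Hypothesis b_unit : basis_mx b \in unitmx.

Lemma coordsK x : coords b x *m basis_mx b = x.
Proof. exact: mulmxKV. Qed.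

Lemma coords_decomp x : x = coords b x 0 0 *: b 0 + coords b x 0 1 *: b 1.
Proof. by rewrite -mulmx_basis_mx coordsK. Qed.

Lemma coords_basis k : coords b (b k) = delta_mx 0 k.
Proof.
have -> : b k = delta_mx 0 k *m basis_mx b by rewrite -rowE; apply/rowP => j; rewrite !mxE.
exact: mulmxK.
Qed.

End Basis.

Lemma amul_natural_basis c b x y : natural_basis c b ->
  amul c x y = (coords b x 0 0 * coords b y 0 0) *: amul c (b 0) (b 0)
             + (coords b x 0 1 * coords b y 0 1) *: amul c (b 1) (b 1).
Proof.
move=> [b_unit b_orth].
have := amul_mulmx_basis_mx c b (coords b x) (coords b y).
by rewrite !coordsK // !sum_ord2 (b_orth 0 1) // (b_orth 1 0) // !scaler0 addr0 add0r.
Qed.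

Lemma natural_basis_perm c b (s : 'S_2) :
  natural_basis c b -> natural_basis c (fun k => b (s k)).
Proof.
move=> [b_unit b_orth]; split=> [|i j ij]; last by apply: b_orth; rewrite (inj_eq perm_inj).
have -> : basis_mx (fun k => b (s k)) = row_perm s (basis_mx b).
  by apply/matrixP => i j; rewrite !mxE.
by rewrite row_permE unitmx_mul unitmx_perm.
Qed.

Lemma natural_basis_scale c b (d : 'I_2 -> K) : (forall k, d k != 0) ->
  natural_basis c b -> natural_basis c (fun k => d k *: b k).
Proof.
move=> d_neq0 [b_unit b_orth]; split=> [|i j ij]; last by rewrite amulZl amulZr b_orth // !scaler0.
have -> : basis_mx (fun k => d k *: b k) = diag_mx (\row_k d k) *m basis_mx b.
  by rewrite mul_diag_mx; apply/matrixP => i j; rewrite !mxE.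
rewrite unitmx_mul b_unit andbT unitmxE det_diag unitfE.
by apply/prodf_neq0 => k _; rewrite mxE.
Qed.

Lemma alg_iso_mult_table c c' b : basis_mx b \in unitmx ->
  (forall i j, coords b (amul c (b i) (b j)) = c' i j) -> alg_iso c c'.
Proof.
move=> b_unit table; exists (invmx (basis_mx b)); split; first by rewrite unitmx_inv.
move=> x y; rewrite -{1}(coordsK b_unit x) -{1}(coordsK b_unit y) amul_mulmx_basis_mx.
rewrite mulmx_suml; apply: eq_bigr => i _; rewrite mulmx_suml; apply: eq_bigr => j _.
by rewrite -scalemxAl -table.
Qed.

Lemma omega_sq c b i j k m : natural_basis c b ->
  amul c (b j) (b j) = k *: b m -> omega c b i j = k * (i == m)%:R.
Proof.
move=> [b_unit _] bj_sq.
by rewrite /omega bj_sq -scalemxAl -/(coords b (b m)) coords_basis // !mxE eqxx.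
Qed.

Lemma pseudo_square_T c b k : natural_basis c b -> k != 0 ->
  amul c (b 0) (b 0) = 0 -> amul c (b 1) (b 1) = k *: b 0 ->
  pseudo_square c b = [set T].
Proof.
move=> nb k_neq0 b0_sq b1_sq.
have om0 i : omega c b i 0 = 0.
  by rewrite (@omega_sq _ _ _ _ 0 0) ?mul0r // b0_sq scale0r.
have om1 i : omega c b i 1 = k * (i == 0)%:R by apply: omega_sq.
by apply/setP => -[]; rewrite !inE /= ?om0 ?om1 /= ?mulr0 ?mulr1 ?eqxx ?k_neq0 //;
  apply/esym/negbTE/eqP.
Qed.

Lemma pseudo_square_D c b k : natural_basis c b -> k != 0 ->
  amul c (b 1) (b 1) = 0 -> amul c (b 0) (b 0) = k *: b 1 ->
  pseudo_square c b = [set D].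
Proof.
move=> nb k_neq0 b1_sq b0_sq.
have om1 i : omega c b i 1 = 0.
  by rewrite (@omega_sq _ _ _ _ 0 0) ?mul0r // b1_sq scale0r.
have om0 i : omega c b i 0 = k * (i == 1)%:R by apply: omega_sq.
by apply/setP => -[]; rewrite !inE /= ?om0 ?om1 /= ?mulr0 ?mulr1 ?eqxx ?k_neq0 //;
  apply/esym/negbTE/eqP.
Qed.

Lemma alg_iso_A6 c b : natural_basis c b ->
  amul c (b 0) (b 0) = 0 -> amul c (b 1) (b 1) = b 0 -> alg_iso c (A6 K).
Proof.
move=> [b_unit b_orth] b0_sq b1_sq; apply: (alg_iso_mult_table b_unit) => i j.
by case: (ord2_cases i) => ->; case: (ord2_cases j) => ->;
  rewrite ?b0_sq ?b1_sq ?b_orth ?coords_basis // /coords mul0mx.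
Qed.

Lemma alg_iso_A6_of_annihilated_square c b : natural_basis c b ->
  amul c (b 1) (b 1) != 0 -> (forall x y z, amul c x (amul c y z) = 0) ->
  alg_iso c (A6 K).
Proof.
move=> nb s_neq0 A3_0; have [b_unit b_orth] := nb.
set s := amul c (b 1) (b 1) in s_neq0 *; set a := coords b s 0 0.
have s_decomp := coords_decomp b_unit s.
have s_b1 : coords b s 0 1 = 0.
  have := A3_0 (b 1) (b 1) (b 1).
  rewrite -/s {1}s_decomp amulDr !amulZr (b_orth 1 0) // scaler0 add0r => /eqP.
  by rewrite scaler_eq0 (negbTE s_neq0) orbF => /eqP.
have {s_decomp} s_b0 : s = a *: b 0 by rewrite {1}s_decomp s_b1 scale0r addr0.
have a_neq0 : a != 0 by apply: contraNneq s_neq0 => a0; rewrite s_b0 a0 scale0r.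
have b0_sq : amul c (b 0) (b 0) = 0.
  have := A3_0 (b 0) (b 1) (b 1); rewrite -/s s_b0 amulZr => /eqP.
  by rewrite scaler_eq0 (negbTE a_neq0) => /eqP.
pose d (k : 'I_2) := if k == 0 then a else 1.
apply: (@alg_iso_A6 _ (fun k => d k *: b k)).
- by apply: natural_basis_scale nb => k; rewrite /d; case: (k == 0); rewrite ?oner_neq0.
- by rewrite /d /= ?eqxx amulZl amulZr b0_sq !scaler0.
- by rewrite /d /= ?eqxx scale1r -/s s_b0.
Qed.

Lemma is_A3_0_mul c : is_A3 c 0%VS -> forall x y z, amul c x (amul c y z) = 0.
Proof.
move=> [V [[A2_sub _] [A3_sub _]]] x y z; apply/eqP; rewrite -memv0.
by apply: A3_sub; exists x, (amul c y z); split=> //; apply: A2_sub; exists y, z.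
Qed.

Lemma is_A2_eq0 c V : is_A2 c V -> (forall x y, amul c x y = 0) -> V = 0%VS.
Proof.
move=> [_ V_min] mul0; apply/eqP; rewrite -subv0.
by apply: V_min => _ [x [y ->]]; rewrite mul0 mem0v.
Qed.

Lemma A6_unique c : is_evolution c -> (exists V, is_A2 c V /\ \dim V = 1%N) ->
  is_A3 c 0%VS -> alg_iso c (A6 K).
Proof.
move=> [b nb] [V [A2V dimV]] /is_A3_0_mul A3_0.
have [i bi_sq] : exists i, amul c (b i) (b i) != 0.
  case: (pickP [pred i | amul c (b i) (b i) != 0]) => [i bi_sq | sq0]; first by exists i.
  have V0 : V = 0%VS.
    apply: (is_A2_eq0 A2V) => x y.
    by rewrite (amul_natural_basis _ _ nb) !(eqP (negbFE (sq0 _))) !scaler0 addr0.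
  by move: dimV; rewrite V0 dimv0.
apply: (alg_iso_A6_of_annihilated_square (natural_basis_perm (tperm i 1) nb)) => //.
by rewrite tpermR.
Qed.

Lemma A6_mul x y : amul (A6 K) x y = (x 0 1 * y 0 1) *: delta_mx 0 0.
Proof. by rewrite amulE /A6 /= !scaler0 !add0r. Qed.

Lemma delta_mx_neq0 k : delta_mx 0 k != 0 :> 'rV[K]_2.
Proof. by apply/eqP => /rowP/(_ k)/eqP; rewrite !mxE !eqxx oner_eq0. Qed.

Lemma A6_natural_basis : natural_basis (A6 K) (delta_mx 0).
Proof.
split=> [|i j ij].
  have -> : basis_mx (delta_mx 0) = 1%:M :> 'M[K]_2 by apply/matrixP => i j; rewrite !mxE eq_sym.
  exact: unitmx1.
by rewrite A6_mul !mxE; case: (ord2_cases i) ij => ->; case: (ord2_cases j) => -> //= _;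
  rewrite ?mulr0 ?mul0r scale0r.
Qed.

Lemma A6_is_A2 : is_A2 (A6 K) <[delta_mx 0%R 0%R]>%VS.
Proof.
split=> [_ [x [y ->]] | W W_sup]; first by rewrite A6_mul memvZ // memv_line.
rewrite -memvE; apply: W_sup; exists (delta_mx 0 1), (delta_mx 0 1).
by rewrite A6_mul !mxE /= mulr1 scale1r.
Qed.

Lemma A6_is_A3 : is_A3 (A6 K) 0%VS.
Proof.
exists <[delta_mx 0%R 0%R]>%VS; split; first exact: A6_is_A2.
split=> [_ [x [_ [/vlineP [k ->] ->]]] | W _]; last exact: sub0v.
by rewrite memv0 A6_mul !mxE /= !mulr0 scale0r.
Qed.

Lemma A6_assoc : assoc_alg (A6 K).
Proof. by move=> x y z; rewrite !A6_mul !mxE /= !mulr0 !mul0r. Qed.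

Lemma A6_natural_basis_sq b i j : natural_basis (A6 K) b -> i != j -> b i 0 1 = 0 ->
  amul (A6 K) (b i) (b i) = 0 /\
  exists2 k, k != 0 & amul (A6 K) (b j) (b j) = k *: b i.
Proof.
move=> [b_unit _] ij bi1.
have [bi0_neq0 bj1_neq0] : b i 0 0 != 0 /\ b j 0 1 != 0.
  move: b_unit; rewrite unitmxE unitfE det_mx2 !mxE.
  case: (ord2_cases i) ij bi1 => ->; case: (ord2_cases j) => -> // _ bi1.
  - by rewrite bi1 mul0r subr0 mulf_eq0 negb_or => /andP.
  - by rewrite bi1 mulr0 sub0r oppr_eq0 mulf_eq0 negb_or andbC => /andP.
have bi_e0 : b i = b i 0 0 *: delta_mx 0 0.
  by apply/rowP => k; rewrite !mxE; case: (ord2_cases k) => -> /=; rewrite ?bi1 ?mulr1 ?mulr0.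
split; first by rewrite A6_mul bi1 mul0r scale0r.
exists (b j 0 1 * b j 0 1 / b i 0 0); first by rewrite !mulf_neq0 ?invr_eq0.
by rewrite A6_mul {2}bi_e0 scalerA mulfVK.
Qed.

Lemma A6_square S : square (A6 K) S <-> frakD6 S.
Proof.
split=> [[b [nb <-]] | [] ->].
- have [_ b_orth] := nb.
  have /eqP : b 0 0 1 * b 1 0 1 = 0.
    move/eqP: (b_orth 0 1 isT).
    by rewrite A6_mul scaler_eq0 (negbTE (delta_mx_neq0 0)) orbF => /eqP.
  rewrite mulf_eq0 => /orP[/eqP b01 | /eqP b11].
  + have [b0_sq [k k_neq0 b1_sq]] := A6_natural_basis_sq (i := 0) (j := 1) nb isT b01.
    by right; apply: pseudo_square_T b0_sq b1_sq.
  + have [b1_sq [k k_neq0 b0_sq]] := A6_natural_basis_sq (i := 1) (j := 0) nb isT b11.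
    by left; apply: pseudo_square_D b1_sq b0_sq.
- have nb := natural_basis_perm (tperm 0 1) A6_natural_basis.
  exists (fun k => delta_mx 0 (tperm 0 1 k)); split=> //.
  apply: (pseudo_square_D nb (oner_neq0 K)); rewrite ?tpermL ?tpermR A6_mul !mxE /=.
    by rewrite mulr0 scale0r.
  by rewrite mulr1 !scale1r.
- exists (delta_mx 0); split; first exact: A6_natural_basis.
  apply: (pseudo_square_T A6_natural_basis (oner_neq0 K)); rewrite A6_mul !mxE /=.
    by rewrite mulr0 scale0r.
  by rewrite mulr1 !scale1r.
Qed.

End TwoDimensionalAlgebras.

Theorem proposition3p12 (K : fieldType) :
  [/\ is_evolution (A6 K),
      (exists V, is_A2 (A6 K) V /\ \dim V = 1%N),
      is_A3 (A6 K) 0%VS,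
      (forall c : struct2 K, is_evolution c ->
         (exists V, is_A2 c V /\ \dim V = 1%N) -> is_A3 c 0%VS ->
         alg_iso c (A6 K)) &
      (forall S, square (A6 K) S <-> frakD6 S) /\ assoc_alg (A6 K)].
Proof.
split.
- by exists (delta_mx 0); exact: A6_natural_basis.
- exists <[delta_mx 0%R 0%R]>%VS; split; first exact: A6_is_A2.
  by rewrite dim_vline delta_mx_neq0.
- exact: A6_is_A3.
- exact: A6_unique.
- split; [exact: A6_square | exact: A6_assoc].
Qed.
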